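(* Let $(G,+)$ be a group. Let $ICE(G)$ be the set of image-commuting pairs $(\varepsilon,\eta)$ of endomorphisms of $(G,+)$, and let $INR(G)$ be the set of interchange near rings $(G,+,\bullet)$ whose underlying group is $(G,+)$ (i.e. the set of binary operations $\bullet$ on $G$ satisfying the interchange law). Then the map $\Psi: ICE(G)\to INR(G)$, $\Psi(\varepsilon,\eta) = (G,+,\bullet_{(\varepsilon,\eta)})$ where $x\bullet_{(\varepsilon,\eta)} y = \varepsilon(x)+\eta(y)$, is a bijection.
   Context: An interchange near ring is a triple $(G,+,\bullet)$ where $(G,+)$ is a group (written additively, not necessarily abelian) and $\bullet$ is a binary operation on $G$ satisfying the interchange law $(w+x)\bullet(y+z) = (w\bullet y)+(x\bullet z)$ for all $w,x,y,z\in G$. A pair $(\varepsilon,\eta)$ of endomorphisms of $(G,+)$ is image-commuting if $\varepsilon(x)+\eta(y) = \eta(y)+\varepsilon(x)$ for all $x,y\in G$. *)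

Record is_group (G : Type) (add : G -> G -> G) (zero : G) (neg : G -> G) : Prop := {
  grp_assoc : forall x y z, add x (add y z) = add (add x y) z;
  grp_zero_l : forall x, add zero x = x;
  grp_zero_r : forall x, add x zero = x;
  grp_neg_l : forall x, add (neg x) x = zero;
  grp_neg_r : forall x, add x (neg x) = zero
}.

Definition is_endo {G : Type} (add : G -> G -> G) (f : G -> G) : Prop :=
  forall x y, f (add x y) = add (f x) (f y).

Definition image_commuting {G : Type} (add : G -> G -> G) (e h : G -> G) : Prop :=
  forall x y, add (e x) (h y) = add (h y) (e x).

Definition in_ICE {G : Type} (add : G -> G -> G) (p : (G -> G) * (G -> G)) : Prop :=
  is_endo add (fst p) /\ is_endo add (snd p) /\ image_commuting add (fst p) (snd p).

Definition interchange {G : Type} (add : G -> G -> G) (op : G -> G -> G) : Prop :=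
  forall w x y z, op (add w x) (add y z) = add (op w y) (op x z).

Definition in_INR {G : Type} (add : G -> G -> G) (op : G -> G -> G) : Prop :=
  interchange add op.

Definition Psi {G : Type} (add : G -> G -> G) (p : (G -> G) * (G -> G)) : G -> G -> G :=
  fun x y => add (fst p x) (snd p y).

From Stdlib Require Import FunctionalExtensionality.

(* - Into: expanding (w+x) * (y+z) = eps w + eps x + eta y + eta z, the two
     middle terms can be swapped because images of eps and eta commute.
   - Injective: endomorphisms fix 0, so eps and eta are recovered from the
     operation as x |-> x * 0 and y |-> 0 * y.
   - Surjective: for an interchange operation *, the law with w = z = 0
     (and y = x = 0 respectively) gives x * y = (x * 0) + (0 * y); the two
     "partial" maps are endomorphisms (interchange with a zero argument on
     one side) whose images commute (interchange on (0 + x) * (y + 0)). *)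

Section InterchangeNearRings.

Variables (G : Type) (add : G -> G -> G) (zero : G) (neg : G -> G).
Hypothesis HG : is_group G add zero neg.

Lemma idempotent_is_zero (a : G) : add a a = a -> a = zero.
Proof.
  intros Haa.
  (* a = (-a + a) + a = -a + (a + a) = -a + a = 0 *)
  rewrite <- (grp_zero_l _ _ _ _ HG a), <- (grp_neg_l _ _ _ _ HG a),
    <- (grp_assoc _ _ _ _ HG), Haa.
  reflexivity.
Qed.

Lemma endo_zero (f : G -> G) : is_endo add f -> f zero = zero.
Proof.
  intros Hf. apply idempotent_is_zero.
  rewrite <- Hf, (grp_zero_l _ _ _ _ HG). reflexivity.
Qed.

Lemma Psi_interchange (p : (G -> G) * (G -> G)) :
  in_ICE add p -> in_INR add (Psi add p).
Proof.
  destruct p as [e h]; intros [He [Hh Hcomm]].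
  unfold in_INR, interchange, Psi; simpl in *.
  intros w x y z.
  rewrite He, Hh.
  rewrite <- !(grp_assoc _ _ _ _ HG). f_equal.
  rewrite !(grp_assoc _ _ _ _ HG). f_equal.
  apply Hcomm.
Qed.

Lemma Psi_left_component (p : (G -> G) * (G -> G)) :
  in_ICE add p -> forall x, Psi add p x zero = fst p x.
Proof.
  intros [_ [Hh _]] x. unfold Psi.
  rewrite (endo_zero _ Hh), (grp_zero_r _ _ _ _ HG). reflexivity.
Qed.

Lemma Psi_right_component (p : (G -> G) * (G -> G)) :
  in_ICE add p -> forall y, Psi add p zero y = snd p y.
Proof.
  intros [He _] y. unfold Psi.
  rewrite (endo_zero _ He), (grp_zero_l _ _ _ _ HG). reflexivity.
Qed.

Lemma Psi_injective (p q : (G -> G) * (G -> G)) :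
  in_ICE add p -> in_ICE add q -> Psi add p = Psi add q -> p = q.
Proof.
  intros Hp Hq Heq.
  destruct p as [e h], q as [e' h'].
  f_equal; apply functional_extensionality; intro x.
  - change (fst (e, h) x = fst (e', h') x).
    rewrite <- (Psi_left_component _ Hp x), <- (Psi_left_component _ Hq x), Heq.
    reflexivity.
  - change (snd (e, h) x = snd (e', h') x).
    rewrite <- (Psi_right_component _ Hp x), <- (Psi_right_component _ Hq x), Heq.
    reflexivity.
Qed.

Section InterchangeOperation.

Variable op : G -> G -> G.
Hypothesis Hop : interchange add op.

Definition partial_maps : (G -> G) * (G -> G) :=
  (fun x => op x zero, fun y => op zero y).

Lemma interchange_split (x y : G) : op x y = add (op x zero) (op zero y).
Proof.
  rewrite <- Hop, (grp_zero_r _ _ _ _ HG), (grp_zero_l _ _ _ _ HG).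
  reflexivity.
Qed.

Lemma partial_left_endo : is_endo add (fst partial_maps).
Proof.
  intros x y; simpl. rewrite <- Hop, (grp_zero_l _ _ _ _ HG). reflexivity.
Qed.

Lemma partial_right_endo : is_endo add (snd partial_maps).
Proof.
  intros x y; simpl. rewrite <- Hop, (grp_zero_l _ _ _ _ HG). reflexivity.
Qed.

(* Both x * y = (x * 0) + (0 * y) and, via (0 + x) * (y + 0),
   x * y = (0 * y) + (x * 0). *)
Lemma partial_maps_commute :
  image_commuting add (fst partial_maps) (snd partial_maps).
Proof.
  intros x y; simpl.
  rewrite <- interchange_split, <- Hop,
    (grp_zero_l _ _ _ _ HG), (grp_zero_r _ _ _ _ HG).
  reflexivity.
Qed.

Lemma partial_maps_in_ICE : in_ICE add partial_maps.
Proof.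
  exact (conj partial_left_endo (conj partial_right_endo partial_maps_commute)).
Qed.

Lemma Psi_partial_maps : Psi add partial_maps = op.
Proof.
  apply functional_extensionality; intro x.
  apply functional_extensionality; intro y.
  symmetry; apply interchange_split.
Qed.

End InterchangeOperation.

Lemma Psi_surjective (op : G -> G -> G) :
  in_INR add op -> exists p, in_ICE add p /\ Psi add p = op.
Proof.
  intros Hop.
  exists (partial_maps op).
  exact (conj (partial_maps_in_ICE op Hop) (Psi_partial_maps op Hop)).
Qed.

End InterchangeNearRings.

Theorem theorem3p4 (G : Type) (add : G -> G -> G) (zero : G) (neg : G -> G)
  (HG : is_group G add zero neg) :
  (* Psi maps ICE(G) into INR(G) *)
  (forall p, in_ICE add p -> in_INR add (Psi add p)) /\
  (* Psi is injective on ICE(G) *)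
  (forall p q, in_ICE add p -> in_ICE add q -> Psi add p = Psi add q -> p = q) /\
  (* Psi is surjective onto INR(G) *)
  (forall op, in_INR add op -> exists p, in_ICE add p /\ Psi add p = op).
Proof.
  split; [| split].
  - exact (Psi_interchange G add zero neg HG).
  - exact (Psi_injective G add zero neg HG).
  - exact (Psi_surjective G add zero neg HG).
Qed.
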